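(* Let $\mathcal{M}$ be a discounted Markov decision process with finite state space $\mathcal{S}$, action space $\mathcal{A}$, transition kernel $P(s'|s,a)$, cost function $c(s,a)$ and discount factor $\gamma\in[0,1)$, and let $\hat{\mathcal{M}}$ be an MDP on the same state and action spaces with transition kernel $\hat P$ and cost $\hat c$ such that for all $(s,a)$, $\|\hat P(\cdot|s,a)-P(\cdot|s,a)\|_1\le\alpha$ and $|\hat c(s,a)-c(s,a)|\le\alpha$. Let $\pi^*$ be an optimal (cost-minimizing) policy on $\mathcal{M}$ with value function $V^{\pi^*}_{\mathcal{M}}(s)=\mathbb{E}\left[\sum_{t\ge0}\gamma^t c(s_t,a_t)\mid s_0=s\right]$, and let $V_{\min}\le V^{\pi^*}_{\mathcal{M}}\le V_{\max}$ and $c_{\min}\le c\le c_{\max}$. For a horizon $H\ge1$, a policy $\pi$, a terminal function $V$ and an MDP $\mathcal{N}$ with cost $c_{\mathcal{N}}$, define for each start state $s_0$ $$J^{\pi}_{\mathcal{N},V,H}(s_0)=\mathbb{E}_{\pi,\mathcal{N}}\left[\sum_{i=0}^{H-1}\gamma^i c_{\mathcal{N}}(s_i,a_i)+\gamma^H V(s_H)\right],$$ where the expectation is over trajectories obtained by executing $\pi$ in $\mathcal{N}$ from $s_0$. Then for any policy $\pi$, $$\left\|J^{\pi}_{\mathcal{M},V^{\pi^*}_{\mathcal{M}},H}-J^{\pi}_{\hat{\mathcal{M}},V^{\pi^*}_{\mathcal{M}},H}\right\|_\infty\le\gamma\frac{1-\gamma^{H-1}}{1-\gamma}\,\alpha H\,\frac{c_{\max}-c_{\min}}{2}+\gamma^H\alpha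 H\,\frac{V_{\max}-V_{\min}}{2}+\frac{1-\gamma^H}{1-\gamma}\alpha,$$ where the $\infty$-norm is taken over the start state $s_0$.
   Context: Costs are minimized. In $J^{\pi}_{\mathcal{M},\cdot,H}$ the running cost is $c$ and transitions follow $P$; in $J^{\pi}_{\hat{\mathcal{M}},\cdot,H}$ the running cost is $\hat c$ and transitions follow $\hat P$; in both the terminal cost is the true optimal value function $V^{\pi^*}_{\mathcal{M}}$. *)

From mathcomp Require Import all_boot all_order all_algebra.
From mathcomp Require Import all_classical all_reals all_analysis.
Set Implicit Arguments. Unset Strict Implicit. Unset Printing Implicit Defensive.
Import Order.TTheory GRing.Theory Num.Theory numFieldNormedType.Exports.
Local Open Scope ring_scope.

Section MDP.
Variables (R : realType) (S A : finType).

Definition is_kernel (P : S -> A -> S -> R) : Prop :=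
  forall s a, (forall s', 0 <= P s a s') /\ \sum_(s' : S) P s a s' = 1.

(* A (general, possibly stochastic and history-dependent) policy:
   pi h s a = probability of action a in current state s after history h
   (the list of past state-action pairs). *)
Definition policy := seq (S * A) -> S -> A -> R.

Definition is_policy (pi : policy) : Prop :=
  forall h s, (forall a, 0 <= pi h s a) /\ \sum_(a : A) pi h s a = 1.

(* Expected discounted cost of running pi for n more steps from current state s
   with history h, with terminal cost V:
   E[ sum_{i<n} gamma^i c(s_i,a_i) + gamma^n V(s_n) ]. *)
Fixpoint Jrec (P : S -> A -> S -> R) (c : S -> A -> R) (gamma : R) (V : S -> R)
    (pi : policy) (n : nat) (h : seq (S * A)) (s : S) : R :=
  match n with
  | 0 => V s
  | n'.+1 => \sum_(a : A) pi h s a *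
       (c s a + gamma * \sum_(s' : S) P s a s' * Jrec P c gamma V pi n' (rcons h (s, a)) s')
  end.

Definition J (P : S -> A -> S -> R) (c : S -> A -> R) (gamma : R) (V : S -> R)
    (pi : policy) (H : nat) (s0 : S) : R :=
  Jrec P c gamma V pi H [::] s0.

Definition value (P : S -> A -> S -> R) (c : S -> A -> R) (gamma : R)
    (pi : policy) (s : S) : R :=
  limn (fun n => J P c gamma (fun _ => 0) pi n s).

Definition optimal_policy (P : S -> A -> S -> R) (c : S -> A -> R) (gamma : R)
    (pistar : policy) : Prop :=
  is_policy pistar /\
  forall pi, is_policy pi -> forall s, value P c gamma pistar s <= value P c gamma pi s.

End MDP.

(* The expected costs J and Ĵ satisfy one-step recursions in which the
   per-step discrepancy splits into the cost error |ĉ - c| <= alpha, a kernel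
   error sum_s' (P - P̂) J_n, and the propagated error sum_s' P̂ (J_n - Ĵ_n).
   As P - P̂ has total mass 0 and l1-norm at most alpha, the kernel error is
   at most alpha times the half-width of the range of J_n, which the bounds on
   c and V confine to an interval of half-width
   (sum_(i<n) gamma^i) (cmax - cmin)/2 + gamma^n (Vmax - Vmin)/2.
   Unrolling the recursion over H steps gives the bound. *)
From mathcomp Require Import all_boot all_order all_algebra.
From mathcomp Require Import all_classical all_reals all_analysis ring lra.
Set Implicit Arguments. Unset Strict Implicit. Unset Printing Implicit Defensive.
Import Order.TTheory GRing.Theory Num.Theory numFieldNormedType.Exports.
Local Open Scope ring_scope.

Section ConvexCombination.
Variables (R : realFieldType) (T : finType).

Lemma convex_comb_itv (w f : T -> R) (l u : R) :
  (forall i, 0 <= w i) -> \sum_i w i = 1 -> (forall i, l <= f i <= u) ->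
  l <= \sum_i w i * f i <= u.
Proof.
move=> w_ge0 w_sum1 f_itv.
have sum_const x : \sum_i w i * x = x by rewrite -mulr_suml w_sum1 mul1r.
rewrite -{1}(sum_const l) -(sum_const u); apply/andP; split;
  apply: ler_sum => i _; apply: ler_wpM2l => //; by case/andP: (f_itv i).
Qed.

Lemma norm_convex_comb_le (w f : T -> R) (E : R) :
  (forall i, 0 <= w i) -> \sum_i w i = 1 -> (forall i, `|f i| <= E) ->
  `|\sum_i w i * f i| <= E.
Proof.
move=> w_ge0 w_sum1 f_le; rewrite -[leRHS]mul1r -w_sum1 mulr_suml.
apply: le_trans (ler_norm_sum _ _ _) _; apply: ler_sum => i _.
by rewrite normrM ger0_norm //; apply: ler_wpM2l.
Qed.

Lemma norm_sum_mass0_le (d f : T -> R) (l u : R) :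
  \sum_i d i = 0 -> (forall i, l <= f i <= u) ->
  `|\sum_i d i * f i| <= (\sum_i `|d i|) * ((u - l) / 2).
Proof.
move=> d_sum0 f_itv.
(* d has total mass 0, so f may be recentred at the midpoint of [l, u] *)
have -> : \sum_i d i * f i = \sum_i d i * (f i - (l + u) / 2).
  under [RHS]eq_bigr do rewrite mulrBr.
  by rewrite sumrB -mulr_suml d_sum0 mul0r subr0.
rewrite mulr_suml; apply: le_trans (ler_norm_sum _ _ _) _.
apply: ler_sum => i _; rewrite normrM; apply: ler_wpM2l => //.
by rewrite ler_norml; case/andP: (f_itv i) => *; apply/andP; split; lra.
Qed.

End ConvexCombination.

Definition geom_sum (R : pzRingType) (gamma : R) (n : nat) : R :=
  \sum_(i < n) gamma ^+ i.

Lemma geom_sumS (R : pzRingType) (gamma : R) n :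
  geom_sum gamma n.+1 = 1 + gamma * geom_sum gamma n.
Proof.
by rewrite /geom_sum big_ord_recl mulr_sumr; under [in RHS]eq_bigr do rewrite -exprS.
Qed.

Lemma mul_geom_sum_pred_le (R : numDomainType) (gamma : R) n :
  gamma * geom_sum gamma n.-1 <= geom_sum gamma n.
Proof. by case: n => [|n]; rewrite ?geom_sumS /geom_sum ?big_ord0 ?mulr0 // lerDr. Qed.

Lemma geom_sumE (R : numFieldType) (gamma : R) n :
  gamma != 1 -> geom_sum gamma n = (1 - gamma ^+ n) / (1 - gamma).
Proof.
move=> gamma_neq1; have := congr1 (fun u => u n) (geometric_seriesE 1 gamma_neq1).
rewrite seriesEord /= mul1r => <-.
by apply: eq_bigr => i _; rewrite mul1r.
Qed.

Lemma policy_charges_action (R : realType) (S A : finType) (pi : policy R S A) h s :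
  is_policy pi -> exists a, 0 < pi h s a.
Proof.
move=> /(_ h s) [pi_ge0 pi_sum1].
have [a /= pos_a] : exists a, true && (0 < pi h s a).
  by apply: psumr_neq0P => //; rewrite pi_sum1; apply/eqP; rewrite oner_eq0.
by exists a.
Qed.

Section HorizonCost.
Variables (R : realType) (S A : finType).
Variables (P : S -> A -> S -> R) (c : S -> A -> R) (gamma : R) (V : S -> R).
Variables (pi : policy R S A) (cmin cmax Vmin Vmax : R).
Hypotheses (P_kernel : is_kernel P) (pi_policy : is_policy pi) (gamma_ge0 : 0 <= gamma).
Hypotheses (c_itv : forall s a, cmin <= c s a <= cmax) (V_itv : forall s, Vmin <= V s <= Vmax).

Lemma Jrec_itv n h s :
  cmin * geom_sum gamma n + gamma ^+ n * Vmin <= Jrec P c gamma V pi n h s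
  <= cmax * geom_sum gamma n + gamma ^+ n * Vmax.
Proof.
elim: n h s => [|n IHn] h s /=.
  by rewrite /geom_sum big_ord0 !mulr0 !add0r !mul1r.
have [pi_ge0 pi_sum1] := pi_policy h s.
apply: convex_comb_itv => // a; have [P_ge0 P_sum1] := P_kernel s a.
have /andP[lo_J hi_J] := convex_comb_itv P_ge0 P_sum1 (IHn (rcons h (s, a))).
have /andP[lo_c hi_c] := c_itv s a.
have := ler_wpM2l gamma_ge0 lo_J; have := ler_wpM2l gamma_ge0 hi_J.
rewrite geom_sumS exprS; move=> *; apply/andP; split; lra.
Qed.

Variables (Phat : S -> A -> S -> R) (chat : S -> A -> R) (alpha : R).
Hypotheses (Phat_kernel : is_kernel Phat)
  (P_close : forall s a, \sum_(s' : S) `|Phat s a s' - P s a s'| <= alpha)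
  (c_close : forall s a, `|chat s a - c s a| <= alpha).

Let Jdiff n h s := Jrec P c gamma V pi n h s - Jrec Phat chat gamma V pi n h s.

Lemma Jdiff_succ_le n h s D : (forall h' s', `|Jdiff n h' s'| <= D) ->
  `|Jdiff n.+1 h s| <= alpha + gamma * (alpha * (geom_sum gamma n * ((cmax - cmin) / 2)
                                          + gamma ^+ n * ((Vmax - Vmin) / 2)) + D).
Proof.
move=> D_bound; rewrite /Jdiff /= -sumrB.
under eq_bigr do rewrite -mulrBr.
have [pi_ge0 pi_sum1] := pi_policy h s.
apply: norm_convex_comb_le => // a.
have [P_ge0 P_sum1] := P_kernel s a; have [Phat_ge0 Phat_sum1] := Phat_kernel s a.
set J := Jrec P c gamma V pi n (rcons h (s, a)).
set Jhat := Jrec Phat chat gamma V pi n (rcons h (s, a)).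
set half_width := geom_sum gamma n * ((cmax - cmin) / 2) + gamma ^+ n * ((Vmax - Vmin) / 2).
have kernel_err : `|\sum_s' (P s a s' - Phat s a s') * J s'| <= alpha * half_width.
  have /andP[J_lo J_hi] := Jrec_itv n (rcons h (s, a)) s.
  have half_width_ge0 : 0 <= half_width by rewrite /half_width; lra.
  apply: le_trans (norm_sum_mass0_le _ (Jrec_itv n (rcons h (s, a)))) _.
    by rewrite sumrB P_sum1 Phat_sum1 subrr.
  rewrite [X in _ * X](_ : _ = half_width); last by rewrite /half_width; field.
  apply: ler_wpM2r => //; under eq_bigr do rewrite distrC; exact: P_close.
have propagated_err : `|\sum_s' Phat s a s' * (J s' - Jhat s')| <= D.
  by apply: norm_convex_comb_le => // s'; apply: D_bound.
have kernel_split : \sum_s' P s a s' * J s' - \sum_s' Phat s a s' * Jhat s'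
    = \sum_s' (P s a s' - Phat s a s') * J s' + \sum_s' Phat s a s' * (J s' - Jhat s').
  by rewrite -sumrB -big_split; apply: eq_bigr => s' _ /=; ring.
rewrite (_ : _ - _ = - (chat s a - c s a) + gamma * (\sum_s' P s a s' * J s'
                                                     - \sum_s' Phat s a s' * Jhat s')); last by ring.
rewrite kernel_split.
apply: le_trans (ler_normD _ _) _; rewrite normrN normrM ger0_norm //.
apply: lerD => //; apply: ler_wpM2l => //.
by apply: le_trans (ler_normD _ _) _; apply: lerD.
Qed.

Lemma Jrec_perturbation n h s :
  `|Jdiff n h s| <= alpha * geom_sum gamma n
                    + alpha * n%:R * gamma ^+ n * ((Vmax - Vmin) / 2)
                    + alpha * n%:R * (gamma * geom_sum gamma n.-1) * ((cmax - cmin) / 2).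
Proof.
elim: n h s => [|n IHn] h s.
  by rewrite /Jdiff subrr normr0 /geom_sum big_ord0 !mulr0 !mul0r !addr0.
apply: le_trans (Jdiff_succ_le h s IHn) _.
have [a _] := policy_charges_action h s pi_policy.
have alpha_ge0 : 0 <= alpha := le_trans (normr_ge0 _) (c_close s a).
have X_ge0 : 0 <= (cmax - cmin) / 2 by case/andP: (c_itv s a) => *; lra.
have shift_le := mul_geom_sum_pred_le gamma n.
have n_ge0 : 0 <= n%:R :> R by [].
rewrite geom_sumS exprS -addn1 natrD.
set g := geom_sum gamma n; set X := (cmax - cmin) / 2; set Y := (Vmax - Vmin) / 2.
have : alpha * n%:R * gamma * X * (gamma * geom_sum gamma n.-1) <= alpha * n%:R * gamma * X * g.
  by apply: ler_wpM2l => //; do 3 apply: mulr_ge0 => //.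
nra.
Qed.

End HorizonCost.

Theorem mainTheorem2 (R : realType) (S A : finType)
  (P Phat : S -> A -> S -> R) (c chat : S -> A -> R) (gamma alpha : R)
  (pistar : policy R S A) (Vmin Vmax cmin cmax : R) (H : nat) (pi : policy R S A) :
  0 <= gamma -> gamma < 1 ->
  is_kernel P -> is_kernel Phat ->
  (forall s a, \sum_(s' : S) `|Phat s a s' - P s a s'| <= alpha) ->
  (forall s a, `|chat s a - c s a| <= alpha) ->
  optimal_policy P c gamma pistar ->
  (forall s, Vmin <= value P c gamma pistar s <= Vmax) ->
  (forall s a, cmin <= c s a <= cmax) ->
  (1 <= H)%N ->
  is_policy pi ->
  forall s0 : S,
    `| J P c gamma (value P c gamma pistar) pi H s0
       - J Phat chat gamma (value P c gamma pistar) pi H s0 |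
    <= gamma * ((1 - gamma ^+ H.-1) / (1 - gamma)) * alpha * H%:R * ((cmax - cmin) / 2)
       + gamma ^+ H * alpha * H%:R * ((Vmax - Vmin) / 2)
       + (1 - gamma ^+ H) / (1 - gamma) * alpha.
Proof.
move=> gamma_ge0 gamma_lt1 P_kernel Phat_kernel P_close c_close _ V_itv c_itv _ pi_policy s0.
have gamma_neq1 : gamma != 1 by rewrite lt_eqF.
rewrite -!geom_sumE //.
apply: le_trans (Jrec_perturbation P_kernel pi_policy gamma_ge0 c_itv V_itv
                   Phat_kernel P_close c_close H [::] s0) _.
lra.
Qed.
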